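(* Let $\mathcal{T}=(\mathbb{K}_i,\phi_i)_{i=0,\dots,m}$ be a tower with $\mathbb{K}_0=\emptyset$ whose maps are elementary inclusions or elementary contractions, named according to the naming convention below, and let $\hat{\mathbb{K}}_0,\dots,\hat{\mathbb{K}}_m$ be the active small coning construction. For every $i$, a simplex $\sigma$ belongs to $\mathbb{K}_i$ if and only if $\sigma$ is an active simplex of $\hat{\mathbb{K}}_i$.
   Context: Elementary inclusion: $\mathbb{K}_{i+1}=\mathbb{K}_i\cup\{\sigma\}$, $\sigma\notin\mathbb{K}_i$, $\phi_i$ the inclusion. Elementary contraction of distinct vertices $u,v$ of $\mathbb{K}_i$: for one of them, say $v$, the vertex set of $\mathbb{K}_{i+1}$ is that of $\mathbb{K}_i$ minus $v$, $\phi_i(u)=\phi_i(v)=u$, $\phi_i$ is the identity on other vertices, and $\mathbb{K}_{i+1}=\phi_i(\mathbb{K}_i)$. Active small coning construction: $\hat{\mathbb{K}}_0=\emptyset$; vertices flagged active/inactive, a simplex is active iff all its vertices are; $\mathrm{Act}\overline{\mathrm{St}}(w,\hat{\mathbb{K}}_i)$ = active simplices of $\hat{\mathbb{K}}_i$ in the closed star of $w$ (all faces of simplices containing $w$). Inclusion of $\sigma$: $\hat{\mathbb{K}}_{i+1}=\hat{\mathbb{K}}_i\cup\{\sigma\}$, a new vertex marked active. Contraction of $u,v$: if $|\mathrm{Act}\overline{\mathrm{St}}(u,\hat{\mathbb{K}}_i)|\le|\mathrm{Act}\overline{\mathrm{St}}(v,\hat{\mathbb{K}}_i)|$, $\hat{\mathbb{K}}_{i+1}=\hat{\mathbb{K}}_i\cup\{\{v\}\cup\tau:\tau\in\mathrm{Act}\overline{\mathrm{St}}(u,\hat{\mathbb{K}}_i)\}$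 and $u$ is marked inactive; otherwise the same with $u,v$ exchanged. Naming convention: each contraction maps $u$ and $v$ to the vertex not marked inactive in that step. *)

From mathcomp Require Import all_boot.
From mathcomp Require Import finmap.

Set Implicit Arguments.
Unset Strict Implicit.
Unset Printing Implicit Defensive.

Local Open Scope fset_scope.

Definition simplex := {fset nat}.
Definition cplx := {fset {fset nat}}.

(* An elementary map of the tower: inclusion of a simplex, or contraction of
   two vertices u, v (which of the two survives is fixed by the naming
   convention, i.e. by the active small coning construction). *)
Inductive op := Incl of {fset nat} | Contr of nat & nat.

(* State after i steps: the tower complex K_i, the coned complex hat K_i,
   and the set of active vertices of hat K_i. *)
Record state := State { K : cplx; Kh : cplx; act : {fset nat} }.

Definition state0 : state := State fset0 fset0 fset0.

Definition cstar (w : nat) (C : cplx) : cplx :=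
  [fset t in \big[fsetU/fset0]_(r <- C | w \in r) fpowerset r | t != fset0].

Definition ActSt (w : nat) (C : cplx) (A : {fset nat}) : cplx :=
  [fset t in cstar w C | t `<=` A].

Definition contract_map (d k : nat) (x : nat) : nat := if x == d then k else x.
Definition contract_cplx (d k : nat) (C : cplx) : cplx :=
  [fset [fset contract_map d k x | x in (s : {fset nat})] | s in C].

Definition cone_step (d k : nat) (st : state) : state :=
  State (contract_cplx d k (K st))
        (Kh st `|` [fset (k |` (t : {fset nat})) | t in ActSt d (Kh st) (act st)])
        (act st `\ d).

Definition step (st : state) (o : op) : state :=
  match o with
  | Incl s => State (K st `|` [fset s]) (Kh st `|` [fset s])
                    (if #|` s| == 1 then act st `|` s else act st)
  | Contr u v =>
      if #|` ActSt u (Kh st) (act st)| <= #|` ActSt v (Kh st) (act st)|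
      then cone_step u v st
      else cone_step v u st
  end.

Definition state_at (ops : seq op) (i : nat) : state :=
  foldl step state0 (take i ops).

Definition valid_step (ops : seq op) (i : nat) : Prop :=
  let st := state_at ops i in
  match nth (Incl fset0) ops i with
  | Incl s =>
      [/\ s != fset0, s \notin K st,
          (forall t : {fset nat}, t != fset0 -> t `<` s -> t \in K st)
          (* K_{i+1} = K_i u {s} is a simplicial complex *)
        & (#|` s| = 1 -> forall j, j <= i -> forall r, r \in K (state_at ops j) ->
              [disjoint s & r])]  (* an included vertex is a new vertex *)
  | Contr u v => [/\ u != v, [fset u] \in K st & [fset v] \in K st]
  end.

Definition tower_ok (ops : seq op) : Prop :=
  forall i, i < size ops -> valid_step ops i.

From mathcomp Require Import all_boot.
From mathcomp Require Import finmap.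

Set Implicit Arguments.
Unset Strict Implicit.
Unset Printing Implicit Defensive.

Local Open Scope fset_scope.

(* Induction along the tower, with three invariants: K_i is the active part of
   hat K_i, hat K_i is closed under nonempty faces, and every vertex of hat K_i
   already occurred in some K_j with j <= i.  A contraction of d into k maps a
   simplex s of K_i containing d to k u (s \ d), the cone with apex k over the
   active face s \ d of the star of d; conversely, a new active cone k u t has
   its base t inside an active simplex t u {d} of hat K_i (face closure), which
   therefore lies in K_i.  Including a vertex activates nothing else, because a
   new vertex lies in no simplex of hat K_i by the third invariant. *)

Lemma mem_ActSt w (C : cplx) (A t : {fset nat}) :
  t \in ActSt w C A <->
  [/\ t != fset0, t `<=` A & exists2 r, r \in C & (w \in r) && (t `<=` r)].
Proof.
rewrite /ActSt /cstar !inE; split.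
- case/andP=> /andP[/bigfcupP[r /andP[rC wr] tr] tn0] tA.
  by split=> //; exists r; rewrite // wr -fpowersetE.
- case=> tn0 tA [r rC /andP[wr tr]]; rewrite tn0 tA !andbT.
  by apply/bigfcupP; exists r; rewrite ?rC ?wr ?fpowersetE.
Qed.

Definition face_closed (C : cplx) : Prop :=
  forall r t : {fset nat}, r \in C -> t != fset0 -> t `<=` r -> t \in C.

Definition active_repr (st : state) : Prop :=
  forall s : {fset nat}, s \in K st <-> s \in Kh st /\ s `<=` act st.

Lemma ActSt_fsetU1_mem w (C : cplx) (A t : {fset nat}) :
  face_closed C -> t \in ActSt w C A -> w |` t \in C.
Proof.
move=> closedC /mem_ActSt[_ _ [r rC /andP[wr tr]]]; apply: (closedC r) => //.
  by apply/fset0Pn; exists w; apply: fset1U1.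
by rewrite fsubUset fsub1set wr.
Qed.

Lemma imfset_contract_map_notin d k (s : {fset nat}) :
  d \notin s -> [fset contract_map d k x | x in s] = s.
Proof.
move=> ds; apply/fsetP => y; apply/imfsetP/idP => [[x xs ->]|ys].
  by rewrite /contract_map; case: eqP => [xd|//]; rewrite -xd xs in ds.
by exists y; rewrite // /contract_map; case: eqP => // yd; rewrite -yd ys in ds.
Qed.

Lemma imfset_contract_map_in d k (s : {fset nat}) :
  d \in s -> [fset contract_map d k x | x in s] = k |` (s `\ d).
Proof.
move=> ds; apply/fsetP => y; rewrite !inE; apply/imfsetP/idP => [[x xs ->]|].
  rewrite /contract_map; case: (x =P d) => [_|/eqP xd]; first by rewrite eqxx.
  by rewrite xd xs orbT.
case/orP => [/eqP ->|/andP[yd ys]]; first by exists d; rewrite // /contract_map eqxx.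
by exists y; rewrite // /contract_map (negbTE yd).
Qed.

Section ConeStep.

Variables (d k : nat) (st : state).

Lemma mem_Kh_cone_step r :
  r \in Kh (cone_step d k st) <->
  r \in Kh st \/ exists2 t, t \in ActSt d (Kh st) (act st) & r = k |` t.
Proof.
rewrite /= inE; split => [/orP[|/imfsetP[t tA ->]]|[->//|[t tA ->]]].
- by left.
- by right; exists t.
- by apply/orP; right; apply/imfsetP; exists t.
Qed.

Lemma fsetU1_mem_Kh_cone_step (t r : {fset nat}) :
  [fset k] \in Kh st -> r \in Kh st -> d \in r -> t `<=` r -> t `<=` act st ->
  k |` t \in Kh (cone_step d k st).
Proof.
move=> kKh rKh dr tr tA; apply/mem_Kh_cone_step.
have [->|tn0] := eqVneq t fset0; first by left; rewrite fsetU0.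
by right; exists t => //; apply/mem_ActSt; split=> //; exists r; rewrite ?dr.
Qed.

Lemma face_closed_cone_step :
  [fset k] \in Kh st -> face_closed (Kh st) -> face_closed (Kh (cone_step d k st)).
Proof.
move=> kKh closedKh r t /mem_Kh_cone_step[rKh|[b /mem_ActSt[_ bA]]].
  by move=> tn0 tr; apply/mem_Kh_cone_step; left; apply: (closedKh r).
move=> [r0 r0Kh /andP[dr0 br0]] -> tn0 tr.
have tkb : t `\ k `<=` b by rewrite fsubDset.
have [kt|nkt] := boolP (k \in t).
  rewrite -(fsetD1K kt); apply: (fsetU1_mem_Kh_cone_step kKh r0Kh dr0).
    exact: fsubset_trans tkb br0.
  exact: fsubset_trans tkb bA.
apply/mem_Kh_cone_step; left; apply: (closedKh r0) => //.
by rewrite -(mem_fsetD1 nkt) (fsubset_trans tkb br0).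
Qed.

Lemma active_repr_cone_step :
  active_repr st -> face_closed (Kh st) -> d != k ->
  [fset d] \in K st -> [fset k] \in K st -> active_repr (cone_step d k st).
Proof.
move=> repr closedKh dk dK kK.
have [_ dA] := (repr _).1 dK; have [kKh kA] := (repr _).1 kK.
move: dA kA; rewrite !fsub1set => dA kA s; split.
- case/imfsetP=> s0 /= s0K ->; have [s0Kh s0A] := (repr _).1 s0K.
  have [ds0|nds0] := boolP (d \in s0); last first.
    by rewrite imfset_contract_map_notin //= inE s0Kh; split=> //; apply/fsubsetD1P.
  rewrite imfset_contract_map_in //; split.
    apply: (fsetU1_mem_Kh_cone_step kKh s0Kh ds0); first exact: fsubsetDl.
    exact: fsubset_trans (fsubsetDl _ _) s0A.
  by rewrite fsubUset fsub1set !inE eq_sym dk kA fsetSD.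
- rewrite [act _]/= => -[/mem_Kh_cone_step[sKh|[t tA ->]] /fsubsetD1P[sA ds]].
    by apply/imfsetP; exists s; rewrite ?imfset_contract_map_notin //; apply/repr.
  have dt : d \notin t by apply: contra ds => dt; rewrite inE dt orbT.
  have [_ tA' _] := (mem_ActSt _ _ _ _).1 tA.
  have dtK : d |` t \in K st.
    apply/repr; rewrite fsubUset fsub1set dA tA'.
    by split=> //; apply: (ActSt_fsetU1_mem closedKh tA).
  apply/imfsetP; exists (d |` t) => //=.
  by rewrite imfset_contract_map_in ?fset1U1 ?fsetU1K.
Qed.

End ConeStep.

Lemma active_repr_step_Contr st u v :
  active_repr st -> face_closed (Kh st) -> u != v ->
  [fset u] \in K st -> [fset v] \in K st -> active_repr (step st (Contr u v)).
Proof.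
move=> repr closedKh uv uK vK; rewrite /=; case: ifP => _.
  exact: active_repr_cone_step.
by apply: active_repr_cone_step; rewrite // eq_sym.
Qed.

Lemma face_closed_step_Contr st u v :
  [fset u] \in Kh st -> [fset v] \in Kh st ->
  face_closed (Kh st) -> face_closed (Kh (step st (Contr u v))).
Proof. by move=> uKh vKh; rewrite /=; case: ifP => _; apply: face_closed_cone_step. Qed.

Section InclStep.

Variables (st : state) (s : {fset nat}).

Hypothesis repr : active_repr st.
Hypothesis faces_in_K : forall t, t != fset0 -> t `<` s -> t \in K st.

Lemma fsubset_act_step_Incl : s `<=` act (step st (Incl s)).
Proof.
rewrite /=; case: ifP => [_|c1]; first exact: fsubsetUr.
apply/fsubsetP => x xs; have xK : [fset x] \in K st.
  apply: faces_in_K; first by apply/fset0Pn; exists x; apply: fset11.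
  rewrite fproperEneq fsub1set xs andbT.
  by apply: contraFN c1 => /eqP <-; rewrite cardfs1.
by have [_] := (repr _).1 xK; rewrite fsub1set.
Qed.

Lemma active_repr_step_Incl :
  (#|` s| = 1 -> forall r, r \in Kh st -> [disjoint s & r]) ->
  active_repr (step st (Incl s)).
Proof.
move=> fresh t; have sA := fsubset_act_step_Incl.
have AA' : act st `<=` act (step st (Incl s)).
  by rewrite /=; case: ifP => _; rewrite ?fsubsetUl.
rewrite /= !inE; split.
- case/orP=> [/repr[tKh tA]|/eqP->]; last by rewrite eqxx orbT.
  by rewrite tKh (fsubset_trans tA AA').
- case=> /orP[tKh|/eqP->] tA'; last by rewrite eqxx orbT.
  apply/orP; left; apply/repr; split=> //; move: tA'.
  rewrite /=; case: ifP => // /eqP c1 tA'; apply/fsubsetP => y yt.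
  move/fsubsetP: tA' => /(_ y yt); rewrite inE => /orP[//|ys].
  by have /fdisjointP/(_ y ys) := fresh c1 t tKh; rewrite yt.
Qed.

Lemma face_closed_step_Incl :
  face_closed (Kh st) -> face_closed (Kh (step st (Incl s))).
Proof.
move=> closedKh r t; rewrite /= !inE => /orP[rKh|/eqP->] tn0 tr.
  by rewrite (closedKh r).
have [_|ts] := eqVneq t s; rewrite ?orbT // orbF.
have tK : t \in K st by apply: faces_in_K; rewrite // fproperEneq ts tr.
by have [-> _] := (repr t).1 tK.
Qed.

End InclStep.

Definition vertex_of (C : cplx) (x : nat) : Prop := exists2 r, r \in C & x \in r.

Lemma vertex_of_Kh_cone_step d k st x :
  [fset k] \in Kh st -> vertex_of (Kh (cone_step d k st)) x -> vertex_of (Kh st) x.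
Proof.
move=> kKh [r /mem_Kh_cone_step[rKh xr|[t /mem_ActSt[_ _ [r0 r0Kh /andP[_ tr0]]] ->]]].
  by exists r.
rewrite !inE => /orP[/eqP->|xt]; first by exists [fset k]; rewrite ?fset11.
by exists r0 => //; apply: (fsubsetP tr0).
Qed.

Lemma vertex_of_Kh_step_Contr st u v x :
  [fset u] \in Kh st -> [fset v] \in Kh st ->
  vertex_of (Kh (step st (Contr u v))) x -> vertex_of (Kh st) x.
Proof. by move=> uKh vKh; rewrite /=; case: ifP => _; apply: vertex_of_Kh_cone_step. Qed.

Lemma vertex_of_Kh_step_Incl st s x :
  vertex_of (Kh (step st (Incl s))) x -> vertex_of (Kh st) x \/ x \in s.
Proof. by case=> r; rewrite /= !inE => /orP[rKh xr|/eqP-> xs]; [left; exists r|right]. Qed.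

Lemma state_atS ops i : i < size ops ->
  state_at ops i.+1 = step (state_at ops i) (nth (Incl fset0) ops i).
Proof. by move=> lti; rewrite /state_at (take_nth (Incl fset0)) // foldl_rcons. Qed.

Definition vertices_seen (ops : seq op) (i : nat) : Prop :=
  forall x, vertex_of (Kh (state_at ops i)) x ->
  exists2 j, j <= i & vertex_of (K (state_at ops j)) x.

Lemma tower_invariants ops : tower_ok ops -> forall i, i <= size ops ->
  [/\ active_repr (state_at ops i), face_closed (Kh (state_at ops i))
    & vertices_seen ops i].
Proof.
move=> ok; elim=> [_|i IH lti].
  rewrite /vertices_seen /state_at take0.
  by split=> [s||x [r]]; rewrite ?inE //; split=> [|[]].
have [repr closedKh seen] := IH (ltnW lti).
have := ok i lti; rewrite /valid_step /vertices_seen (state_atS lti).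
case E: (nth _ ops i) => [s|u v]; [case=> _ _ faces_in_K fresh|case=> uv uK vK].
- have fresh_Kh : #|` s| = 1 -> forall r, r \in Kh (state_at ops i) -> [disjoint s & r].
    move=> c1 r rKh; apply/fdisjointP => y ys; apply/negP => yr.
    case: (seen y) => [|j ji [r' r'K yr']]; first by exists r.
    by have /fdisjointP/(_ y ys) := fresh c1 j ji r' r'K; rewrite yr'.
  split; [exact: active_repr_step_Incl|exact: face_closed_step_Incl|].
  move=> x /vertex_of_Kh_step_Incl[/seen[j ji xj]|xs]; first by exists j => //; apply: leqW.
  by exists i.+1 => //; exists s; rewrite // (state_atS lti) E /= !inE eqxx orbT.
- have [uKh _] := (repr _).1 uK; have [vKh _] := (repr _).1 vK.
  split; [exact: active_repr_step_Contr|exact: face_closed_step_Contr|].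
  move=> x /(vertex_of_Kh_step_Contr uKh vKh)/seen[j ji xj].
  by exists j => //; apply: leqW.
Qed.

Theorem lemma4 (ops : seq op) :
  tower_ok ops ->
  forall i, i <= size ops ->
  forall s : {fset nat},
    s \in K (state_at ops i) <->
    (s \in Kh (state_at ops i) /\ s `<=` act (state_at ops i)).
Proof. by move=> ok i lei; have [repr _ _] := tower_invariants ok lei. Qed.
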